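(* Let $I$ be a finite set, $\tau$ a total order of $I$, and $A=(A_1,\dots,A_\ell)$, $B$ set compositions of $I$ with $B$ refining $A$. Then $$\Big(\mathrm{Resf}^{\mathrm{UT}(\tau|_{A_1})}_{\mathrm{UL}(\tau|_{A_1},B|_{A_1})}\otimes\cdots\otimes\mathrm{Resf}^{\mathrm{UT}(\tau|_{A_\ell})}_{\mathrm{UL}(\tau|_{A_\ell},B|_{A_\ell})}\Big)\circ\mathrm{Resf}^{\mathrm{UT}(\tau)}_{\mathrm{UL}(\tau,A)}=\mathrm{Resf}^{\mathrm{UT}(\tau)}_{\mathrm{UL}(\tau,B)}$$ as maps $\mathsf{cf}(\mathrm{UT}(\tau))\to\mathsf{cf}(\mathrm{UL}(\tau,B))$.
   Context: Fix the finite field $\mathbb{F}_q$. For a finite set $I$, $\mathrm{GL}(I)$ is the group of invertible $I\times I$ matrices over $\mathbb{F}_q$ with identity $1_I$. A total order $\tau$ of $I$ is a reflexive, antisymmetric, transitive, total relation $\tau\subseteq I\times I$; $\tau|_J=\tau\cap(J\times J)$. For a relation $\pi$ containing the diagonal, $\mathrm{UT}(\pi)=\{X\in\mathrm{GL}(I):(X-1_I)_{i,j}\ne0\text{ only if }(i,j)\in\pi\}$. A set composition $A=(A_1,\dots,A_\ell)$ of $I$ is a sequence of pairwise disjoint nonempty sets with union $I$; for $J\subseteq I$, $C|_J$ is $(C_1\cap J,\dots)$ with empty sets removed; $B$ refines $A$ if $B=B|_{A_1}\cdots B|_{A_\ell}$ (concatenation). $\mathrm{Asc}(A)=\bigsqcup_{r<s}A_r\times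 A_s$, $\mathrm{Eq}(A)=\bigsqcup_rA_r\times A_r$. $\mathrm{UL}(\tau,A)=\mathrm{UT}(\tau\cap\mathrm{Eq}(A))$, $\mathrm{UR}(\tau,A)=\mathrm{UT}(\{(i,i)\}\cup(\tau\cap\mathrm{Asc}(A)))$, $\mathrm{UP}(\tau,A)=\mathrm{UT}(\tau\cap(\mathrm{Eq}(A)\cup\mathrm{Asc}(A)))=\mathrm{UL}(\tau,A)\ltimes\mathrm{UR}(\tau,A)$. Since $\mathrm{UL}(\tau,A)=\mathrm{UT}(\tau|_{A_1})\oplus\cdots\oplus\mathrm{UT}(\tau|_{A_\ell})$ (block diagonal), $\mathsf{cf}(\mathrm{UL}(\tau,A))$ is identified with $\bigotimes_r\mathsf{cf}(\mathrm{UT}(\tau|_{A_r}))$; similarly $\mathrm{UL}(\tau,B)=\bigoplus_r\mathrm{UL}(\tau|_{A_r},B|_{A_r})$. Here $\mathsf{cf}(G)$ denotes complex class functions on $G$, and $\mathrm{Resf}^{\mathrm{UT}(\tau)}_{\mathrm{UL}(\tau,A)}=\mathrm{Def}^{\mathrm{UP}(\tau,A)}_{\mathrm{UL}(\tau,A)}\circ\mathrm{Res}^{\mathrm{UT}(\tau)}_{\mathrm{UP}(\tau,A)}$, where $\mathrm{Res}$ is restriction and deflation is $\mathrm{Def}^{\mathrm{UP}(\tau,A)}_{\mathrm{UL}(\tau,A)}\psi(g)=\frac{1}{|\mathrm{UR}(\tau,A)|}\sum_{x\in\mathrm{UR}(\tau,A)}\psi(gx)$ for $g\in\mathrm{UL}(\tau,A)$.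 *)

From HB Require Import structures.
From mathcomp Require Import all_boot all_order all_algebra algC.
Set Implicit Arguments. Unset Strict Implicit. Unset Printing Implicit Defensive.
Import GRing.Theory Num.Theory.
Local Open Scope ring_scope.

Section Defs.
Variable F : finFieldType.

Definition mat (J : finType) := {ffun J * J -> F}.

Definition mmul (J : finType) (X Y : mat J) : mat J :=
  [ffun ij => \sum_(k : J) X (ij.1, k) * Y (k, ij.2)].
Definition mone (J : finType) : mat J := [ffun ij => ((ij.1 == ij.2 :> J)%:R : F)].

Definition invertible (J : finType) (X : mat J) : bool :=
  [exists Y : mat J, (mmul X Y == mone J) && (mmul Y X == mone J)].

Definition UT (J : finType) (pi : rel J) : {set mat J} :=
  [set X : mat J | invertible X &&
     [forall ij : J * J, (X ij - mone J ij != 0) ==> pi ij.1 ij.2]].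

Definition total_order (J : finType) (tau : rel J) : Prop :=
  [/\ reflexive tau, antisymmetric tau, transitive tau & total tau].

Definition set_composition (J : finType) (C : seq {set J}) : Prop :=
  [/\ all (fun S : {set J} => S != set0) C,
      pairwise (fun S T : {set J} => [disjoint S & T]) C &
      \bigcup_(S <- C) S = setT].

Definition restrc (J : finType) (C : seq {set J}) (K : {set J}) : seq {set J} :=
  filter (fun S : {set J} => S != set0) (map (fun S : {set J} => S :&: K) C).

Definition refines (J : finType) (B A : seq {set J}) : Prop :=
  B = flatten (map (restrc B) A).

Definition blk (J : finType) (C : seq {set J}) (r : nat) : {set J} := nth set0 C r.

Definition Asc (J : finType) (C : seq {set J}) : rel J := fun i j =>
  [exists r : 'I_(size C), exists s : 'I_(size C),
     [&& (r < s)%N, i \in blk C r & j \in blk C s]].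
Definition Eqc (J : finType) (C : seq {set J}) : rel J := fun i j =>
  has (fun S : {set J} => (i \in S) && (j \in S)) C.

Definition UL (J : finType) (tau : rel J) (C : seq {set J}) : {set mat J} :=
  UT (fun i j => tau i j && Eqc C i j).
Definition UR (J : finType) (tau : rel J) (C : seq {set J}) : {set mat J} :=
  UT (fun i j => (i == j) || (tau i j && Asc C i j)).
Definition UP (J : finType) (tau : rel J) (C : seq {set J}) : {set mat J} :=
  UT (fun i j => tau i j && (Eqc C i j || Asc C i j)).

(* complex functions on matrices; a class function on G is one constant on
   G-conjugacy classes *)
Definition is_classfun (J : finType) (G : {set mat J}) (psi : mat J -> algC) : Prop :=
  forall g h x, g \in G -> h \in G -> x \in G ->
    mmul g h = mmul h x -> psi x = psi g.

Definition Res (J : finType) (H : {set mat J}) (psi : mat J -> algC) : mat J -> algC :=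
  fun g => if g \in H then psi g else 0.
Definition Def (J : finType) (N : {set mat J}) (psi : mat J -> algC) : mat J -> algC :=
  fun g => (#|N|%:R)^-1 * \sum_(x in N) psi (mmul g x).

Definition Resf (J : finType) (tau : rel J) (C : seq {set J}) (psi : mat J -> algC)
  : mat J -> algC := Def (UR tau C) (Res (UP tau C) psi).

Definition Tsub (J : finType) (A : seq {set J}) (r : nat) : finType :=
  {x : J | x \in blk A r}.
Definition sub_rel (J : finType) (tau : rel J) (A : seq {set J}) (r : nat)
  : rel (Tsub A r) := fun x y => tau (val x) (val y).
Arguments sub_rel [J] tau A r.

Definition sub_comp (J : finType) (B A : seq {set J}) (r : nat) : seq {set Tsub A r} :=
  map (fun S : {set J} => [set x : Tsub A r | val x \in S]) (restrc B (blk A r)).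
Definition blkmx (J : finType) (A : seq {set J}) (r : nat) (X : mat J) : mat (Tsub A r) :=
  [ffun ij => X (val ij.1, val ij.2)].

Definition delta (J : finType) (M : mat J) : mat J -> algC := fun N => (N == M)%:R.

(* The tensor product  Resf_1 (x) ... (x) Resf_l  of linear maps, acting on
   functions on UL(tau,A) = UT(tau|A_1) (+) ... (+) UT(tau|A_l) (identified with
   the tensor product of the function spaces via X |-> (blkmx r X)_r),
   and producing a function on UL(tau,B) = (+)_r UL(tau|A_r, B|A_r)
   (identified likewise via Y |-> (blkmx r Y)_r).  It is defined on the basis
   of delta functions delta_X = (x)_r delta_{X_r} and extended linearly. *)
Definition tensor_Resf (J : finType) (tau : rel J) (A B : seq {set J})
  (phi : mat J -> algC) : mat J -> algC := fun Y =>
  \sum_(X in UL tau A) phi X *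
     \prod_(r < size A) Resf (sub_rel tau A r) (sub_comp B A r)
                            (delta (blkmx A r X)) (blkmx A r Y).

End Defs.

(** Put D := UR(tau,B) ∩ UL(tau,A); it is block diagonal, with blocks
    UR(tau|A_r, B|A_r).  Evaluating the tensor product of the Resf's on delta
    functions shows that at Y ∈ UL(tau,B) the left-hand side equals the average
    of Resf(tau,A) psi (Y x) over x ∈ D, i.e. the average of psi (Y x z) over
    (x, z) ∈ D × UR(tau,A).  Since UR(tau,B) = D · UR(tau,A), the fibres of the
    product map D × UR(tau,A) -> UR(tau,B) all have |D ∩ UR(tau,A)| elements,
    so this is the average of psi (Y w) over w ∈ UR(tau,B), which is
    Resf(tau,B) psi Y. *)

From HB Require Import structures.
From mathcomp Require Import all_boot all_order all_algebra all_fingroup algC.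
Set Implicit Arguments. Unset Strict Implicit. Unset Printing Implicit Defensive.
Import GRing.Theory Num.Theory.
Local Open Scope ring_scope.

Section MatrixProduct.
Variables (F : finFieldType) (J : finType).
Implicit Types X Y Z : mat F J.

Lemma mmulE X Y i j : mmul X Y (i, j) = \sum_k X (i, k) * Y (k, j).
Proof. by rewrite ffunE. Qed.

Lemma moneE i j : mone F J (i, j) = (i == j)%:R.
Proof. by rewrite ffunE. Qed.

Lemma mmulA X Y Z : mmul X (mmul Y Z) = mmul (mmul X Y) Z.
Proof.
apply/ffunP => -[i j]; rewrite !mmulE.
under eq_bigr do rewrite mmulE big_distrr.
under [RHS]eq_bigr do rewrite mmulE big_distrl.
by rewrite exchange_big; apply: eq_bigr => k _; apply: eq_bigr => l _ /=; rewrite mulrA.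
Qed.

Lemma mmul1l X : mmul (mone F J) X = X.
Proof.
apply/ffunP => -[i j]; rewrite mmulE (bigD1 i) //= moneE eqxx mul1r.
by rewrite big1 ?addr0 // => k /negbTE ki; rewrite moneE eq_sym ki mul0r.
Qed.

Lemma mmul1r X : mmul X (mone F J) = X.
Proof.
apply/ffunP => -[i j]; rewrite mmulE (bigD1 j) //= moneE eqxx mulr1.
by rewrite big1 ?addr0 // => k /negbTE kj; rewrite moneE kj mulr0.
Qed.

Definition minv X : mat F J :=
  odflt X [pick Y | (mmul X Y == mone F J) && (mmul Y X == mone F J)].

Lemma minvP X : invertible X ->
  mmul X (minv X) = mone F J /\ mmul (minv X) X = mone F J.
Proof.
rewrite /invertible /minv => /existsP[Y HY].
by case: pickP => [Z /andP[/eqP -> /eqP ->] //|/(_ Y)]; rewrite HY.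
Qed.

Lemma invertibleP X Y : mmul X Y = mone F J -> mmul Y X = mone F J -> invertible X.
Proof. by move=> XY YX; apply/existsP; exists Y; rewrite XY YX eqxx. Qed.

Lemma invertible_mone : invertible (mone F J).
Proof. by apply: (@invertibleP _ (mone F J)); rewrite mmul1l. Qed.

Lemma invertible_mmul X Y : invertible X -> invertible Y -> invertible (mmul X Y).
Proof.
move=> /minvP[X1 X2] /minvP[Y1 Y2]; apply: (@invertibleP _ (mmul (minv Y) (minv X))).
  by rewrite -mmulA (mmulA Y) Y1 mmul1l X1.
by rewrite -mmulA (mmulA (minv X)) X2 mmul1l Y2.
Qed.

Lemma invertible_minv X : invertible X -> invertible (minv X).
Proof. by move=> /minvP[X1 X2]; apply: (invertibleP X2 X1). Qed.

End MatrixProduct.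

Definition GLmx (F : finFieldType) (J : finType) := {X : mat F J | invertible X}.
HB.instance Definition _ (F : finFieldType) (J : finType) := Finite.on (GLmx F J).
HB.instance Definition _ (F : finFieldType) (J : finType) := SubType.on (GLmx F J).

Section GLgroup.
Variables (F : finFieldType) (J : finType).
Local Notation G := (GLmx F J).

Definition GLmul (g h : G) : G :=
  exist _ (mmul (val g) (val h)) (invertible_mmul (valP g) (valP h)).
Definition GLone : G := exist _ (mone F J) (invertible_mone F J).
Definition GLinv (g : G) : G := exist _ (minv (val g)) (invertible_minv (valP g)).

Lemma GLmulA : associative GLmul.
Proof. by move=> x y z; apply: val_inj; rewrite /= mmulA. Qed.

Lemma GLmul1g : left_id GLone GLmul.
Proof. by move=> x; apply: val_inj; rewrite /= mmul1l. Qed.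

Lemma GLmulVg : left_inverse GLone GLinv GLmul.
Proof. by move=> x; apply: val_inj; rewrite /= (proj2 (minvP (valP x))). Qed.

End GLgroup.

HB.instance Definition _ (F : finFieldType) (J : finType) :=
  Finite_isGroup.Build (GLmx F J) (@GLmulA F J) (@GLmul1g F J) (@GLmulVg F J).

Lemma GLvalM (F : finFieldType) (J : finType) (g h : GLmx F J) :
  val (g * h)%g = mmul (val g) (val h).
Proof. by []. Qed.

Section ProductSum.
Variables (gT : finGroupType) (D R : {group gT}).

Lemma card_mulg_fibre w : w \in (D * R)%g ->
  #|[set x in D | w \in (x *: R)%g]| = #|D :&: R|.
Proof.
case/mulsgP=> d r Dd Rr ->.
have -> : [set x in D | (d * r)%g \in (x *: R)%g] = [set (d * y)%g | y in D :&: R].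
  apply/setP => x; rewrite !inE; apply/andP/imsetP => [[Dx]|[y]].
    rewrite mem_lcoset => dr_xR; exists (d^-1 * x)%g; last by rewrite mulKVg.
    rewrite !inE groupM ?groupV //=.
    have : (x^-1 * d)%g \in R by rewrite -(groupMr _ Rr) -mulgA.
    by rewrite -[(d^-1 * x)%g]invgK invMg invgK groupV.
  rewrite !inE => /andP[Dy Ry] ->; split; first by rewrite groupM.
  by rewrite mem_lcoset invMg -!mulgA mulKg groupM ?groupV.
by rewrite card_imset //; apply: mulgI.
Qed.

Lemma sum_mulg_pairs (V : nmodType) (f : gT -> V) :
  \sum_(x in D) \sum_(z in R) f (x * z)%g = (\sum_(w in (D * R)%g) f w) *+ #|D :&: R|.
Proof.
have coset_sum x : \sum_(z in R) f (x * z)%g = \sum_(w in (x *: R)%g) f w.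
  rewrite [RHS](reindex_inj (mulgI x)) /=; apply: eq_bigl => z.
  by rewrite mem_lcoset mulKg.
under eq_bigr do rewrite coset_sum.
rewrite (exchange_big_dep (fun w => w \in (D * R)%g)) /=; last first.
  by move=> x w Dx; rewrite mem_lcoset => Rw; rewrite -(mulKVg x w) mem_mulg.
rewrite -sumrMnl; apply: eq_bigr => w DRw.
rewrite -(card_mulg_fibre DRw) sumr_const; congr (_ *+ _).
by apply: eq_card => x; rewrite inE.
Qed.

End ProductSum.

Section UpperSets.
Variables (F : finFieldType) (J : finType).
Implicit Types (X Y : mat F J) (pi : rel J).

Definition supp pi X := forall i j, ~~ pi i j -> X (i, j) = mone F J (i, j).

Lemma UTP pi X : reflect (invertible X /\ supp pi X) (X \in UT F pi).
Proof.
rewrite inE; apply: (iffP andP) => -[iX sX]; split => //.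
  move=> i j pij; apply/eqP; rewrite -subr_eq0; apply: contraNT pij => nz.
  by have /forallP/(_ (i, j)) := sX; rewrite nz.
apply/forallP => -[i j] /=; apply/implyP; apply: contraR => pij.
by rewrite sX // subrr.
Qed.

Lemma UT_ext pi pi' : pi =2 pi' -> UT F pi = UT F pi'.
Proof.
move=> e; apply/setP => X; rewrite !inE; congr (_ && _).
by apply: eq_forallb => ij; rewrite e.
Qed.

Lemma UT_sub pi pi' X : subrel pi pi' -> X \in UT F pi -> X \in UT F pi'.
Proof.
move=> sub /UTP[iX sX]; apply/UTP; split => // i j /negP npi'.
by apply: sX; apply/negP => /sub.
Qed.

Lemma UT_mone pi : mone F J \in UT F pi.
Proof. by apply/UTP; split; [exact: invertible_mone|]. Qed.

Lemma supp_mmul pi X Y : transitive pi -> supp pi X -> supp pi Y -> supp pi (mmul X Y).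
Proof.
move=> tr sX sY i j pij; rewrite mmulE -[in RHS](mmul1l (mone F J)) mmulE.
apply: eq_bigr => k _; case: (boolP (pi i k)) => pik.
  have pkj : ~~ pi k j by apply: contra pij; apply: (tr k).
  rewrite (sY _ _ pkj) !moneE; case: (eqVneq k j) => [->|]; last by rewrite !mulr0.
  by rewrite (sX _ _ pij) moneE.
rewrite (sX _ _ pik) !moneE; case: (eqVneq i k) => [<-|]; last by rewrite !mul0r.
by rewrite (sY _ _ pij) moneE.
Qed.

Lemma UT_mmul pi X Y : transitive pi ->
  X \in UT F pi -> Y \in UT F pi -> mmul X Y \in UT F pi.
Proof.
move=> tr /UTP[iX sX] /UTP[iY sY]; apply/UTP.
by split; [exact: invertible_mmul | exact: supp_mmul].
Qed.

Definition UTg pi : {set GLmx F J} := [set g | val g \in UT F pi].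

Lemma UTgE pi g : (g \in UTg pi) = (val g \in UT F pi).
Proof. by rewrite inE. Qed.

Lemma UTg_group_set pi : transitive pi -> group_set (UTg pi).
Proof.
move=> tr; apply/group_setP; split; first by rewrite UTgE UT_mone.
by move=> x y; rewrite !UTgE GLvalM; apply: UT_mmul.
Qed.

Lemma UT_minv pi X : transitive pi -> X \in UT F pi -> minv X \in UT F pi.
Proof.
move=> tr XUT; have iX : invertible X by case/UTP: XUT.
pose G := Group (UTg_group_set tr).
have gG : exist _ X iX \in G by rewrite /= UTgE.
by have := groupVr gG; rewrite /= UTgE.
Qed.

Lemma UTg_imset pi : val @: UTg pi = UT F pi.
Proof.
apply/setP => X; apply/imsetP/idP => [[g]|UX]; first by rewrite UTgE => ? ->.
have iX : invertible X by case/UTP: UX.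
by exists (exist _ X iX); rewrite ?UTgE.
Qed.

Lemma card_UTg pi : #|UTg pi| = #|UT F pi|.
Proof. by rewrite -UTg_imset card_imset //; apply: val_inj. Qed.

Lemma sum_UTg pi (f : mat F J -> algC) :
  \sum_(X in UT F pi) f X = \sum_(g in UTg pi) f (val g).
Proof. by rewrite -UTg_imset big_imset //= => x y _ _; apply: val_inj. Qed.

End UpperSets.

Section Compositions.
Variable J : finType.
Implicit Types (C : seq {set J}) (i j : J).

Definition hasin C i := has (fun S : {set J} => i \in S) C.

Lemma AscP C i j : reflect (exists r s, [/\ (r < s)%N, (s < size C)%N,
   i \in blk C r & j \in blk C s]) (Asc C i j).
Proof.
apply: (iffP existsP) => [[r /existsP[s /and3P[rs ri sj]]]|[r [s [rs sC ri sj]]]].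
  by exists r, s.
exists (Ordinal (ltn_trans rs sC)); apply/existsP; exists (Ordinal sC).
by rewrite /= rs ri sj.
Qed.

Lemma Asc_nil i j : Asc [::] i j = false.
Proof. by apply/AscP => -[r [s [_]]]. Qed.

Lemma Asc_cons S C i j : Asc (S :: C) i j = ((i \in S) && hasin C j) || Asc C i j.
Proof.
apply/AscP/orP => [[r [s [rs sC ri sj]]]|].
  case: s rs sC sj => [//|s] rs sC sj.
  case: r rs ri => [|r] rs ri.
    by left; rewrite ri /=; apply/(has_nthP set0); exists s.
  by right; apply/AscP; exists r, s.
case=> [/andP[iS /(has_nthP set0)[s sC sj]]|/AscP[r [s [rs sC ri sj]]]].
  by exists 0%N, s.+1.
by exists r.+1, s.+1.
Qed.

Lemma hasin_cat C1 C2 i : hasin (C1 ++ C2) i = hasin C1 i || hasin C2 i.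
Proof. exact: has_cat. Qed.

Lemma Asc_cat C1 C2 i j :
  Asc (C1 ++ C2) i j = [|| Asc C1 i j, hasin C1 i && hasin C2 j | Asc C2 i j].
Proof.
elim: C1 => [|S C1 IH] /=; first by rewrite Asc_nil.
rewrite !Asc_cons IH hasin_cat.
by case: (i \in S); case: (hasin C1 i); case: (hasin C1 j); case: (hasin C2 j);
  case: (Asc C1 i j); case: (Asc C2 i j).
Qed.

Lemma hasin_filter0 C i : hasin [seq S <- C | S != set0] i = hasin C i.
Proof.
elim: C => [|S C IH] //=; case: (eqVneq S set0) => [->|_] /=; last by rewrite IH.
by rewrite /hasin /= inE.
Qed.

Lemma Asc_filter0 C i j : Asc [seq S <- C | S != set0] i j = Asc C i j.
Proof.
elim: C => [|S C IH] //=; case: (eqVneq S set0) => [->|_] /=.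
  by rewrite Asc_cons inE IH.
by rewrite !Asc_cons IH hasin_filter0.
Qed.

Lemma Eqc_filter0 C i j : Eqc [seq S <- C | S != set0] i j = Eqc C i j.
Proof.
elim: C => [|S C IH] //=; case: (eqVneq S set0) => [->|_] /=.
  by rewrite /Eqc /= inE.
by rewrite /Eqc /= -/(Eqc _ i j) IH.
Qed.

Lemma hasin_setI K C i :
  hasin [seq U :&: K | U <- C] i = (i \in K) && hasin C i.
Proof.
rewrite /hasin has_map; elim: C => [|S C IH] /=; first by rewrite andbF.
by rewrite IH inE; case: (i \in S); case: (i \in K).
Qed.

Lemma Asc_setI K C i j :
  Asc [seq U :&: K | U <- C] i j = [&& i \in K, j \in K & Asc C i j].
Proof.
elim: C => [|S C IH] /=; first by rewrite Asc_nil !andbF.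
rewrite !Asc_cons IH hasin_setI inE.
by case: (i \in S); case: (i \in K); case: (j \in K).
Qed.

Lemma Eqc_setI K C i j :
  Eqc [seq U :&: K | U <- C] i j = [&& i \in K, j \in K & Eqc C i j].
Proof.
rewrite /Eqc has_map; elim: C => [|S C IH] /=; first by rewrite !andbF.
rewrite IH !inE.
by case: (i \in S); case: (j \in S); case: (i \in K); case: (j \in K).
Qed.

Lemma hasin_restrc B K i : hasin (restrc B K) i = (i \in K) && hasin B i.
Proof. by rewrite hasin_filter0 hasin_setI. Qed.

Lemma Asc_restrc B K i j : Asc (restrc B K) i j = [&& i \in K, j \in K & Asc B i j].
Proof. by rewrite Asc_filter0 Asc_setI. Qed.

Lemma Eqc_restrc B K i j : Eqc (restrc B K) i j = [&& i \in K, j \in K & Eqc B i j].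
Proof. by rewrite Eqc_filter0 Eqc_setI. Qed.

Lemma Asc_flatten_restrc B A i j : (forall k, hasin B k) ->
  Asc (flatten (map (restrc B) A)) i j = (Eqc A i j && Asc B i j) || Asc A i j.
Proof.
move=> coverB.
have hasin_flatten k A' : hasin (flatten (map (restrc B) A')) k = hasin A' k.
  by elim: A' => [|S A' IH] //=; rewrite hasin_cat IH hasin_restrc coverB andbT.
elim: A => [|S A IH] /=; first by rewrite Asc_nil.
rewrite Asc_cat IH Asc_restrc hasin_restrc coverB hasin_flatten Asc_cons /Eqc /hasin /=.
by case: (i \in S); case: (j \in S); case: (Asc B i j); case: (Asc A i j);
  case: (has _ A); case: (has _ A).
Qed.

End Compositions.

Section Preimage.
Variables (T J : finType) (h : T -> J).
Implicit Types (C : seq {set J}) (x y : T).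

Lemma Asc_preim C x y :
  Asc [seq [set z | h z \in U] | U : {set J} <- C] x y = Asc C (h x) (h y).
Proof.
elim: C => [|S C IH] /=; first by rewrite !Asc_nil.
rewrite !Asc_cons IH inE /hasin has_map; congr (_ && _ || _).
by apply: eq_has => S'; rewrite /= inE.
Qed.

Lemma Eqc_preim C x y :
  Eqc [seq [set z | h z \in U] | U : {set J} <- C] x y = Eqc C (h x) (h y).
Proof. by rewrite /Eqc has_map; apply: eq_has => S; rewrite /= !inE. Qed.

End Preimage.

Section BlockIndex.
Variables (J : finType) (C : seq {set J}).
Hypothesis compC : set_composition C.
Implicit Types i j : J.

Definition bidx i : nat := find (fun S : {set J} => i \in S) C.

Lemma hasin_cover i : hasin C i.
Proof.
have mem_bigcup D : (i \in \bigcup_(S <- D) S) = hasin D i.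
  by elim: D => [|S D IH]; rewrite ?big_nil ?in_set0 // big_cons in_setU IH.
by case: compC => _ _ cover; rewrite -mem_bigcup cover inE.
Qed.

Lemma bidx_lt i : (bidx i < size C)%N.
Proof. by rewrite -has_find; apply: hasin_cover. Qed.

Lemma mem_bidx i : i \in blk C (bidx i).
Proof. exact: (nth_find set0 (hasin_cover i)). Qed.

Lemma bidx_blk i r : i \in blk C r -> bidx i = r.
Proof.
move=> ir; have rC : (r < size C)%N.
  by rewrite ltnNge; apply: contraL ir => /(nth_default set0); rewrite /blk => ->; rewrite inE.
case: compC => _ /(pairwiseP set0) disj _.
have ib := mem_bidx i; have bC := bidx_lt i.
case: (ltngtP (bidx i) r) => // lt.
  by have /disjointFr/(_ ib)/negbT := disj _ _ bC rC lt; rewrite ir.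
by have /disjointFr/(_ ir)/negbT := disj _ _ rC bC lt; rewrite ib.
Qed.

Lemma Eqc_bidx i j : Eqc C i j = (bidx i == bidx j).
Proof.
apply/idP/eqP => [/(has_nthP set0)[r _ /andP[ir jr]]|e].
  by rewrite (bidx_blk ir) (bidx_blk jr).
apply/(has_nthP set0); exists (bidx i); first exact: bidx_lt.
by rewrite mem_bidx e mem_bidx.
Qed.

Lemma Asc_bidx i j : Asc C i j = (bidx i < bidx j)%N.
Proof.
apply/AscP/idP => [[r [s [rs _ ir js]]]|lt].
  by rewrite (bidx_blk ir) (bidx_blk js).
by exists (bidx i), (bidx j); split => //; rewrite ?bidx_lt ?mem_bidx.
Qed.

End BlockIndex.

Section Blocks.
Variables (F : finFieldType) (I : finType) (A : seq {set I}).
Hypothesis compA : set_composition A.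
Local Notation a := (bidx A).
Local Notation n := (size A).
Implicit Types X Y Z : mat F I.

Definition bdiag X := forall i j, a i != a j -> X (i, j) = 0.

Definition bdpart X : mat F I := [ffun ij => if a ij.1 == a ij.2 then X ij else 0].

Lemma bdpartE X i j : bdpart X (i, j) = if a i == a j then X (i, j) else 0.
Proof. by rewrite ffunE. Qed.

Lemma bdiag_bdpart X : bdiag (bdpart X).
Proof. by move=> i j /negbTE ne; rewrite bdpartE ne. Qed.

Lemma bdpart_id X : bdiag X -> bdpart X = X.
Proof. by move=> bX; apply/ffunP => -[i j]; rewrite bdpartE; case: eqP => // /eqP/bX ->. Qed.

Lemma mmul_bdpart X Z : bdiag X -> mmul X (bdpart Z) = bdpart (mmul X Z).
Proof.
move=> bX; apply/ffunP => -[i j]; rewrite bdpartE !mmulE.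
case: eqP => e.
  apply: eq_bigr => k _; rewrite bdpartE; case: eqP => // /eqP ne.
  by rewrite bX ?mul0r // e eq_sym.
rewrite big1 // => k _; rewrite bdpartE; case: eqP => [e'|]; last by rewrite mulr0.
by rewrite bX ?mul0r //; apply: contra_not_neq e => ->.
Qed.

Lemma bdiag_mone : bdiag (mone F I).
Proof. by move=> i j; rewrite moneE; case: (eqVneq i j) => [->|]; rewrite ?eqxx. Qed.

Lemma bdiag_mmul X Y : bdiag X -> bdiag Y -> bdiag (mmul X Y).
Proof. by move=> bX bY; rewrite -(bdpart_id bY) mmul_bdpart //; apply: bdiag_bdpart. Qed.

Lemma bdiag_inverse X Z : bdiag X -> mmul X Z = mone F I -> mmul Z X = mone F I -> bdiag Z.
Proof.
move=> bX XZ ZX.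
have XZ' : mmul X (bdpart Z) = mone F I
  by rewrite mmul_bdpart // XZ bdpart_id //; apply: bdiag_mone.
have -> : Z = bdpart Z by rewrite -{1}[Z]mmul1r -XZ' mmulA ZX mmul1l.
exact: bdiag_bdpart.
Qed.

Definition bupper X := forall i j, (a j < a i)%N -> X (i, j) = 0.

Lemma bdpart_mmul_bupper X Y : bupper X -> bupper Y -> mmul X Y = mone F I ->
  mmul (bdpart X) (bdpart Y) = mone F I.
Proof.
move=> uX uY XY; apply/ffunP => -[i j]; rewrite mmulE.
case: (eqVneq (a i) (a j)) => eij; last first.
  rewrite big1; first by rewrite moneE; case: (eqVneq i j) eij => [->|]; rewrite ?eqxx.
  move=> k _; rewrite !bdpartE; case: eqP => [eik|]; last by rewrite mul0r.
  by case: eqP => [ekj|]; [case/eqP: eij; rewrite eik ekj|rewrite mulr0].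
rewrite -XY mmulE; apply: eq_bigr => k _; rewrite !bdpartE.
case: eqP => [eik|/eqP nik]; first by rewrite -eik eij eqxx.
rewrite mul0r; case: (ltngtP (a i) (a k)) nik => // lt _.
  by rewrite (uY k j) ?mulr0 // -eij.
by rewrite uX ?mul0r.
Qed.

Lemma blkmxE r X (x y : Tsub A r) : blkmx A r X (x, y) = X (val x, val y).
Proof. by rewrite ffunE. Qed.

Lemma blkmx_mmul r X Y : bdiag X ->
  blkmx A r (mmul X Y) = mmul (blkmx A r X) (blkmx A r Y).
Proof.
move=> bX; apply/ffunP => -[x y]; rewrite blkmxE !mmulE.
rewrite (bigID (fun k => k \in blk A r)) /= [X in _ + X]big1 ?addr0.
  by rewrite (big_sub (blk A r)); apply: eq_bigr => z _; rewrite !blkmxE.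
move=> k kr; rewrite bX ?mul0r // (bidx_blk compA (valP x)).
by apply: contra kr => /eqP ->; apply: mem_bidx.
Qed.

Lemma blkmx_mone r : blkmx A r (mone F I) = mone F (Tsub A r).
Proof. by apply/ffunP => -[x y]; rewrite blkmxE !moneE. Qed.

Lemma invertible_blkmx r X : bdiag X -> invertible X -> invertible (blkmx A r X).
Proof.
move=> bX /minvP[XZ ZX]; have bZ := bdiag_inverse bX XZ ZX.
apply: (@invertibleP _ _ _ (blkmx A r (minv X))).
  by rewrite -blkmx_mmul // XZ blkmx_mone.
by rewrite -blkmx_mmul // ZX blkmx_mone.
Qed.

Lemma same_block_blkmx i j : a i = a j ->
  exists r : 'I_n, exists x y : Tsub A r, val x = i /\ val y = j.
Proof.
move=> e; exists (Ordinal (bidx_lt compA i)).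
have ir : i \in blk A (a i) by apply: mem_bidx.
have jr : j \in blk A (a i) by rewrite e; apply: mem_bidx.
by exists (exist _ i ir), (exist _ j jr).
Qed.

Lemma bdiag_blkmx_inj X Y : bdiag X -> bdiag Y ->
  (forall r : 'I_n, blkmx A r X = blkmx A r Y) -> X = Y.
Proof.
move=> bX bY e; apply/ffunP => -[i j].
case: (eqVneq (a i) (a j)) => [eij|ne]; last by rewrite bX ?bY.
have [r [x [y [<- <-]]]] := same_block_blkmx eij.
by rewrite -!blkmxE e.
Qed.

Definition blkdiag (f : forall r : 'I_n, mat F (Tsub A r)) : mat F I :=
  [ffun ij => \sum_(r : 'I_n)
     match insub ij.1 : option (Tsub A r), insub ij.2 : option (Tsub A r) with
     | Some x, Some y => f r (x, y) | _, _ => 0 end].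

Lemma eq_blkdiag f g : (forall r, f r = g r) -> blkdiag f = blkdiag g.
Proof. by move=> e; apply/ffunP => ij; rewrite !ffunE; apply: eq_bigr => r _; rewrite e. Qed.

Lemma bdiag_blkdiag f : bdiag (blkdiag f).
Proof.
move=> i j ne; rewrite ffunE big1 // => r _ /=.
case: (@insubP _ _ (Tsub A r) i) => [x ir _|_] //.
case: (@insubP _ _ (Tsub A r) j) => [y jr _|_] //.
by case/eqP: ne; rewrite (bidx_blk compA ir) (bidx_blk compA jr).
Qed.

Lemma blkmx_blkdiag f (r : 'I_n) : blkmx A r (blkdiag f) = f r.
Proof.
apply/ffunP => -[x y]; rewrite blkmxE ffunE /= (bigD1 r) //= !valK big1 ?addr0 //.
move=> s sr; case: (@insubP _ _ (Tsub A s) (val x)) => [x' xs _|_] //.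
case: (@insubP _ _ (Tsub A s) (val y)) => [y' ys _|_] //.
case/eqP: sr; apply: val_inj => /=.
by rewrite -(bidx_blk compA xs) (bidx_blk compA (valP x)).
Qed.

Lemma blkdiag_mmul f g : mmul (blkdiag f) (blkdiag g) = blkdiag (fun r => mmul (f r) (g r)).
Proof.
apply: bdiag_blkmx_inj => [||r].
- exact: bdiag_mmul (bdiag_blkdiag f) (bdiag_blkdiag g).
- exact: bdiag_blkdiag.
- rewrite blkmx_mmul; last exact: bdiag_blkdiag.
  by rewrite !blkmx_blkdiag.
Qed.

Lemma blkdiag_mone : blkdiag (fun r => mone F (Tsub A r)) = mone F I.
Proof.
apply: bdiag_blkmx_inj => [||r]; [exact: bdiag_blkdiag | exact: bdiag_mone |].
by rewrite blkmx_blkdiag blkmx_mone.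
Qed.

Lemma invertible_blkdiag f : (forall r, invertible (f r)) -> invertible (blkdiag f).
Proof.
move=> fi; apply: (@invertibleP _ _ _ (blkdiag (fun r => minv (f r)))).
  by rewrite blkdiag_mmul -blkdiag_mone; apply: eq_blkdiag => r; case: (minvP (fi r)).
by rewrite blkdiag_mmul -blkdiag_mone; apply: eq_blkdiag => r; case: (minvP (fi r)).
Qed.

End Blocks.

Section ResfEvaluation.
Variables (F : finFieldType) (J : finType) (t : rel J) (C : seq {set J}).

Lemma ResfE (psi : mat F J -> algC) Y :
  (forall u, u \in UR F t C -> mmul Y u \in UP F t C) ->
  Resf t C psi Y = #|UR F t C|%:R^-1 * \sum_(u in UR F t C) psi (mmul Y u).
Proof.
move=> YUP; rewrite /Resf /Def; congr (_ * _).
by apply: eq_bigr => u /YUP; rewrite /Res => ->.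
Qed.

Lemma Resf_delta M Y Z :
  (forall u, u \in UR F t C -> mmul Y u \in UP F t C) ->
  mmul Y Z = mone F J -> mmul Z Y = mone F J ->
  Resf t C (delta M) Y = #|UR F t C|%:R^-1 * (mmul Z M \in UR F t C)%:R.
Proof.
move=> YUP YZ ZY; rewrite ResfE //; congr (_ * _).
have -> : \sum_(u in UR F t C) delta M (mmul Y u)
          = \sum_(u in UR F t C) (u == mmul Z M)%:R.
  apply: eq_bigr => u _; rewrite /delta.
  suff -> : (mmul Y u == M) = (u == mmul Z M) by [].
  by apply/eqP/eqP => [<-|->]; rewrite mmulA ?ZY ?YZ mmul1l.
case: (boolP (mmul Z M \in UR F t C)) => ZM; last first.
  by rewrite big1 // => u uUR; case: eqP => // e; rewrite -e uUR in ZM.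
by rewrite (bigD1 (mmul Z M)) //= eqxx big1 ?addr0 // => u /andP[_ /negbTE ->].
Qed.

End ResfEvaluation.

Lemma prod_natr_bool (R : comPzSemiRingType) (T : finType) (P : pred T) :
  \prod_(r : T) ((P r)%:R : R) = [forall r, P r]%:R.
Proof.
case: (boolP [forall r, P r]) => [/forallP allP|/forallPn[r Pr]].
  by rewrite big1 // => r _; rewrite allP.
by rewrite (bigD1 r) //= (negbTE Pr) mul0r.
Qed.

Lemma invn_mulrn_cancel (R : numFieldType) (d r u k : nat) (s : R) :
  (d * r = u * k)%N -> (0 < k)%N -> d%:R^-1 * (r%:R^-1 * (s *+ k)) = u%:R^-1 * s.
Proof.
move=> card k_gt0; rewrite mulrA -invfM -natrM card natrM invfM -mulrA.
by rewrite -[s *+ k]mulr_natl mulKf // pnatr_eq0 -lt0n.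
Qed.

Section Refinement.
Variables (F : finFieldType) (I : finType) (tau : rel I) (A B : seq {set I}).
Hypotheses (tau_total : total_order tau) (compA : set_composition A)
  (compB : set_composition B) (refBA : refines B A).
Local Notation a := (bidx A).
Local Notation b := (bidx B).
Local Notation n := (size A).
Implicit Types (X Y Z : mat F I) (i j k : I).

Lemma tau_refl : reflexive tau. Proof. by case: tau_total. Qed.
Lemma tau_trans : transitive tau. Proof. by case: tau_total. Qed.

Lemma bidx_refines_ltn i j :
  (b i < b j)%N = ((a i == a j) && (b i < b j)%N) || (a i < a j)%N.
Proof.
have := Asc_flatten_restrc A i j (hasin_cover compB); rewrite -refBA.
by rewrite !(Asc_bidx compA) !(Asc_bidx compB) (Eqc_bidx compA).
Qed.

Lemma bidx_refines_lt i j : (a i < a j)%N -> (b i < b j)%N.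
Proof. by move=> lt; rewrite bidx_refines_ltn lt orbT. Qed.

Lemma bidx_refines_le i j : (b i < b j)%N -> (a i <= a j)%N.
Proof.
move=> lt; rewrite leqNgt; apply/negP => /bidx_refines_lt gt.
by have := ltn_trans lt gt; rewrite ltnn.
Qed.

Lemma bidx_refines_eq i j : b i = b j -> a i = a j.
Proof.
move=> e; apply/eqP; rewrite eqn_leq.
by apply/andP; split; rewrite leqNgt; apply/negP => /bidx_refines_lt; rewrite e ltnn.
Qed.

Definition relUL C i j := tau i j && Eqc C i j.
Definition relUR C i j := (i == j) || (tau i j && Asc C i j).
Definition relUP C i j := tau i j && (Eqc C i j || Asc C i j).

(* UT relD = UR(tau,B) ∩ UL(tau,A) *)
Definition relD i j := (i == j) || [&& tau i j, Asc B i j & Eqc A i j].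

Lemma relUP_bidx C : set_composition C ->
  forall i j, relUP C i j = tau i j && (bidx C i <= bidx C j)%N.
Proof. by move=> compC i j; rewrite /relUP (Eqc_bidx compC) (Asc_bidx compC) -leq_eqVlt. Qed.

Lemma trans_relUP C : set_composition C -> transitive (relUP C).
Proof.
move=> compC k i j; rewrite !(relUP_bidx compC) => /andP[tik le_ik] /andP[tkj le_kj].
by rewrite (tau_trans tik tkj) (leq_trans le_ik le_kj).
Qed.

Lemma trans_relUL C : set_composition C -> transitive (relUL C).
Proof.
move=> compC k i j; rewrite /relUL !(Eqc_bidx compC) => /andP[tik /eqP->] /andP[tkj /eqP->].
by rewrite (tau_trans tik tkj) eqxx.
Qed.

Lemma trans_relUR C : set_composition C -> transitive (relUR C).
Proof.
move=> compC k i j; rewrite /relUR !(Asc_bidx compC).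
case: (eqVneq i k) => [->//|_] /= /andP[tik lt_ik].
case: (eqVneq k j) => [<-|_] /=; first by rewrite tik lt_ik orbT.
by case/andP=> tkj lt_kj; rewrite (tau_trans tik tkj) (ltn_trans lt_ik lt_kj) orbT.
Qed.

Lemma trans_relD : transitive relD.
Proof.
move=> k i j; rewrite /relD !(Asc_bidx compB) !(Eqc_bidx compA).
case: (eqVneq i k) => [->//|_] /= /and3P[tik lt_ik /eqP e_ik].
case: (eqVneq k j) => [<-|_] /=; first by rewrite tik lt_ik e_ik eqxx orbT.
case/and3P=> tkj lt_kj /eqP e_kj.
by rewrite (tau_trans tik tkj) (ltn_trans lt_ik lt_kj) e_ik e_kj eqxx orbT.
Qed.

Lemma subrel_UR_UP C : set_composition C -> subrel (relUR C) (relUP C).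
Proof.
move=> compC i j /orP[/eqP->|/andP[tij aij]]; rewrite /relUP.
  by rewrite tau_refl (Eqc_bidx compC) eqxx.
by rewrite tij aij orbT.
Qed.

Lemma subrel_UL_UP C : subrel (relUL C) (relUP C).
Proof. by move=> i j /andP[tij eij]; rewrite /relUP tij eij. Qed.

Lemma subrel_D_UL : subrel relD (relUL A).
Proof.
move=> i j /orP[/eqP->|/and3P[tij _ eij]]; rewrite /relUL.
  by rewrite tau_refl (Eqc_bidx compA) eqxx.
by rewrite tij eij.
Qed.

Lemma subrel_D_UR : subrel relD (relUR B).
Proof. by move=> i j /orP[eij|/and3P[tij aij _]]; rewrite /relUR ?eij ?tij ?aij ?orbT. Qed.

Lemma subrel_URA_URB : subrel (relUR A) (relUR B).
Proof.
rewrite /relUR => i j; rewrite (Asc_bidx compA) (Asc_bidx compB).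
by case/orP => [->//|/andP[-> /bidx_refines_lt ->]]; rewrite orbT.
Qed.

Lemma subrel_ULB_ULA : subrel (relUL B) (relUL A).
Proof.
rewrite /relUL => i j; rewrite (Eqc_bidx compA) (Eqc_bidx compB).
by case/andP=> -> /eqP/bidx_refines_eq/eqP.
Qed.

Local Notation URr r := (UR F (@sub_rel I tau A r) (sub_comp B A r)).
Local Notation UPr r := (UP F (@sub_rel I tau A r) (sub_comp B A r)).

Lemma URr_E r : URr r = UT F (fun x y : Tsub A r => relUR B (val x) (val y)).
Proof.
apply: UT_ext => x y.
by rewrite /relUR /sub_comp Asc_preim Asc_restrc (valP x) (valP y).
Qed.

Lemma UPr_E r : UPr r = UT F (fun x y : Tsub A r => relUP B (val x) (val y)).
Proof.
apply: UT_ext => x y.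
by rewrite /relUP /sub_comp Asc_preim Eqc_preim Asc_restrc Eqc_restrc (valP x) (valP y).
Qed.

Lemma mone_val r (x y : Tsub A r) : mone F (Tsub A r) (x, y) = mone F I (val x, val y).
Proof. by rewrite !moneE. Qed.

Lemma bdiag_D X : X \in UT F relD -> bdiag A X.
Proof.
case/UTP => _ sX i j ne; rewrite sX ?moneE.
  by case: (eqVneq i j) ne => [->|]; rewrite ?eqxx.
rewrite /relD (Eqc_bidx compA) (negbTE ne) !andbF orbF.
by apply: contra ne => /eqP ->.
Qed.

Lemma bdiag_ULA X : X \in UT F (relUL A) -> bdiag A X.
Proof.
case/UTP => _ sX i j ne; rewrite sX ?moneE.
  by case: (eqVneq i j) ne => [->|]; rewrite ?eqxx.
by rewrite /relUL (Eqc_bidx compA) (negbTE ne) andbF.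
Qed.

Lemma UT_D_blocks X : bdiag A X -> invertible X ->
  (X \in UT F relD) = [forall r : 'I_n, blkmx A r X \in URr r].
Proof.
move=> bX iX; apply/idP/forallP => [/UTP[_ sX] r|blocksUR].
  rewrite URr_E; apply/UTP; split; first exact: invertible_blkmx.
  move=> x y nxy; rewrite blkmxE mone_val sX //.
  apply: contra nxy; rewrite /relD /relUR => /orP[->//|/and3P[-> -> _]].
  by rewrite orbT.
apply/UTP; split => // i j nij.
case: (eqVneq (a i) (a j)) => [eij|ne]; last first.
  by rewrite bX // moneE; case: (eqVneq i j) ne => [->|]; rewrite ?eqxx.
have [r [x [y [xi yj]]]] := same_block_blkmx compA eij.
have := blocksUR r; rewrite URr_E => /UTP[_ sXr].
rewrite -xi -yj -blkmxE -mone_val sXr // xi yj.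
apply: contra nij; rewrite /relUR /relD (Eqc_bidx compA) eij eqxx andbT.
by case/orP=> [->//|/andP[-> ->]]; rewrite orbT.
Qed.

Definition blocks X : {dffun forall r : 'I_n, mat F (Tsub A r)} :=
  [ffun r : 'I_n => blkmx A r X].

Lemma card_D : #|UT F relD| = (\prod_(r < n) #|URr r|)%N.
Proof.
rewrite -(@card_in_imset _ _ blocks); last first.
  move=> X1 X2 X1D X2D e.
  apply: (bdiag_blkmx_inj compA (bdiag_D X1D) (bdiag_D X2D)) => r.
  by have /ffunP/(_ r) := e; rewrite !ffunE.
pose URfam := fun r : 'I_n => [pred M | M \in URr r].
transitivity #|(family URfam : simpl_pred {dffun forall r : 'I_n, mat F (Tsub A r)})|.
  apply: eq_card => f; apply/imsetP/familyP => [[X XD ->] r|fUR].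
    have iX : invertible X by case/UTP: XD.
    by move: (XD); rewrite ffunE (UT_D_blocks (bdiag_D XD) iX) => /forallP; apply.
  have fi r : invertible (f r) by have /UTP[] := fUR r.
  exists (blkdiag f); last by apply/ffunP => r; rewrite ffunE blkmx_blkdiag.
  rewrite UT_D_blocks; [|exact: bdiag_blkdiag|exact: invertible_blkdiag].
  by apply/forallP => r; rewrite blkmx_blkdiag; have := fUR r; rewrite inE.
rewrite card_family foldrE big_map big_enum /=.
by apply: eq_bigr => r _; apply: eq_card => M; rewrite inE.
Qed.

Lemma bupper_URB w : w \in UT F (relUR B) -> bupper A w.
Proof.
case/UTP => _ sw i j lt; rewrite sw ?moneE.
  by case: (eqVneq i j) lt => [->|]; rewrite ?ltnn.
rewrite /relUR (Asc_bidx compB); apply/negP => /orP[/eqP e|/andP[_ /bidx_refines_le]].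
  by rewrite e ltnn in lt.
by rewrite leqNgt lt.
Qed.

Lemma bdpart_URB_inverse w : w \in UT F (relUR B) ->
  mmul (bdpart A w) (bdpart A (minv w)) = mone F I /\
  mmul (bdpart A (minv w)) (bdpart A w) = mone F I.
Proof.
move=> wUR; have /minvP[wv vw] : invertible w by case/UTP: wUR.
have uw := bupper_URB wUR; have uv := bupper_URB (UT_minv (trans_relUR compB) wUR).
by split; apply: bdpart_mmul_bupper.
Qed.

Lemma bdpart_URB_D w : w \in UT F (relUR B) -> bdpart A w \in UT F relD.
Proof.
move=> wUR; have [wv vw] := bdpart_URB_inverse wUR.
apply/UTP; split; first exact: invertibleP wv vw.
move=> i j nij; rewrite bdpartE; case: eqP => eij; last first.
  by rewrite moneE; case: (eqVneq i j) eij => [->|].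
case/UTP: wUR => _ -> //; apply: contra nij.
rewrite /relUR /relD (Eqc_bidx compA) eij eqxx andbT.
by case/orP => [->|/andP[-> ->]]; rewrite ?orbT.
Qed.

Lemma bdpart_minv_mmul_URA w : w \in UT F (relUR B) ->
  mmul (bdpart A (minv w)) w \in UT F (relUR A).
Proof.
move=> wUR; have [wv vw] := bdpart_URB_inverse wUR.
have vUR := UT_minv (trans_relUR compB) wUR.
have iv : invertible (bdpart A (minv w)) := invertibleP vw wv.
have /UTP[iw sw] := wUR; have /UTP[_ sv] := vUR.
apply/UTP; split; first exact: invertible_mmul.
move=> i j nij; case: (eqVneq (a i) (a j)) => eij.
  rewrite -vw !mmulE; apply: eq_bigr => k _; rewrite !bdpartE.
  by case: eqP => [eik|]; [rewrite -eik eij eqxx|rewrite !mul0r].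
rewrite moneE; case: (eqVneq i j) eij => [->|neij eij]; first by rewrite eqxx.
rewrite /= mmulE big1 // => k _; rewrite bdpartE.
case: eqP => [eik|]; last by rewrite mul0r.
have nkj : k != j by apply: contra eij => /eqP <-; rewrite eik.
case: (boolP (relUR B k j)) => Rkj; last by rewrite sw // moneE (negbTE nkj) mulr0.
move: Rkj; rewrite /relUR (negbTE nkj) (Asc_bidx compB) /=.
case/andP=> tkj /bidx_refines_le le_kj.
have lt_ij : (a i < a j)%N by rewrite ltn_neqAle eij eik.
have ntij : ~~ tau i j.
  by move: nij; rewrite /relUR (Asc_bidx compA) lt_ij andbT negb_or => /andP[].
have nik : i != k by apply: contra ntij => /eqP ->.
rewrite sv ?moneE ?(negbTE nik) ?mul0r // /relUR (negbTE nik) /=.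
by apply/negP => /andP[tik _]; rewrite (tau_trans tik tkj) in ntij.
Qed.

Lemma URB_factor w : w \in UT F (relUR B) ->
  exists x z, [/\ x \in UT F relD, z \in UT F (relUR A) & w = mmul x z].
Proof.
move=> wUR; have [wv _] := bdpart_URB_inverse wUR.
exists (bdpart A w), (mmul (bdpart A (minv w)) w); split.
- exact: bdpart_URB_D.
- exact: bdpart_minv_mmul_URA.
- by rewrite mmulA wv mmul1l.
Qed.

Definition Dg : {group GLmx F I} := Group (UTg_group_set F trans_relD).
Definition URAg : {group GLmx F I} := Group (UTg_group_set F (trans_relUR compA)).

Lemma mulg_D_URA : (Dg * URAg)%g = UTg F (relUR B).
Proof.
apply/setP => g; rewrite UTgE; apply/mulsgP/idP => [[x z]|].
  rewrite !UTgE => xD zUR ->; rewrite GLvalM; apply: (UT_mmul (trans_relUR compB)).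
    exact: UT_sub subrel_D_UR xD.
  exact: UT_sub subrel_URA_URB zUR.
case/URB_factor=> x [z [xD zUR e]].
have /UTP[ix _] := xD; have /UTP[iz _] := zUR.
exists (exist _ x ix) (exist _ z iz); rewrite ?UTgE //.
by apply: val_inj; rewrite GLvalM -e.
Qed.

Lemma sum_D_URA (f : mat F I -> algC) :
  \sum_(x in UT F relD) \sum_(z in UT F (relUR A)) f (mmul x z)
  = (\sum_(w in UT F (relUR B)) f w) *+ #|Dg :&: URAg|.
Proof.
rewrite !sum_UTg; under eq_bigr do rewrite sum_UTg.
by rewrite -mulg_D_URA -(sum_mulg_pairs Dg URAg (fun g => f (val g))).
Qed.

Lemma card_D_URA :
  (#|UT F relD| * #|UT F (relUR A)| = #|UT F (relUR B)| * #|Dg :&: URAg|)%N.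
Proof. by rewrite -!card_UTg -mulg_D_URA -(mul_cardG Dg URAg). Qed.

Section AtY.
Variable Y : mat F I.
Hypothesis YUL : Y \in UT F (relUL B).

Lemma Y_ULA : Y \in UT F (relUL A).
Proof. exact: UT_sub subrel_ULB_ULA YUL. Qed.

Lemma blkmx_mmul_URr_UPr r u : u \in URr r -> mmul (blkmx A r Y) u \in UPr r.
Proof.
rewrite URr_E UPr_E => uUR.
have /UTP[iY sY] := YUL; have bY := bdiag_ULA Y_ULA.
apply: UT_mmul; first by move=> k x y; apply: (trans_relUP compB).
  apply/UTP; split; first exact: invertible_blkmx.
  move=> x y nxy; rewrite blkmxE mone_val sY //.
  by apply: contra nxy; apply: subrel_UL_UP.
by apply: UT_sub uUR => x y; apply: subrel_UR_UP.
Qed.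

Lemma prod_Resf_delta X : X \in UT F (relUL A) ->
  \prod_(r < n) Resf (@sub_rel I tau A r) (sub_comp B A r) (delta (blkmx A r X)) (blkmx A r Y)
  = #|UT F relD|%:R^-1 * (mmul (minv Y) X \in UT F relD)%:R.
Proof.
move=> XUL; have /UTP[iX _] := XUL; have bX := bdiag_ULA XUL.
have /UTP[iY _] := YUL; have [YZ ZY] := minvP iY.
have bY := bdiag_ULA Y_ULA; have bZ := bdiag_inverse bY YZ ZY.
rewrite (eq_bigr (fun r : 'I_n =>
  #|URr r|%:R^-1 * (blkmx A r (mmul (minv Y) X) \in URr r)%:R)).
  rewrite big_split /= prodfV -natr_prod -card_D prod_natr_bool -UT_D_blocks //.
    exact: bdiag_mmul.
  exact: invertible_mmul (invertible_minv iY) iX.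
move=> r _; rewrite (@Resf_delta _ _ _ _ _ _ (blkmx A r (minv Y))) ?blkmx_mmul //.
- exact: blkmx_mmul_URr_UPr.
- by rewrite -blkmx_mmul // YZ blkmx_mone.
- by rewrite -blkmx_mmul // ZY blkmx_mone.
Qed.

Lemma tensor_ResfE (phi : mat F I -> algC) :
  tensor_Resf tau A B phi Y = #|UT F relD|%:R^-1 * \sum_(x in UT F relD) phi (mmul Y x).
Proof.
have /UTP[iY _] := YUL; have [YZ ZY] := minvP iY.
rewrite /tensor_Resf; under eq_bigr => X XUL do rewrite prod_Resf_delta //.
rewrite big_distrr (bigID (fun X => mmul (minv Y) X \in UT F relD)) /=.
rewrite [X in _ + X]big1 ?addr0; last first.
  by move=> X /andP[_ /negbTE ->]; rewrite !mulr0.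
have ZYx x : mmul (minv Y) (mmul Y x) = x by rewrite mmulA ZY mmul1l.
rewrite (reindex_onto (mmul Y) (mmul (minv Y))) => [|X _]; last by rewrite mmulA YZ mmul1l.
apply: eq_big => x; rewrite ZYx eqxx andbT; last by case/andP=> _ ->; rewrite mulr1 mulrC.
apply/andP/idP => [[] //|xD]; split => //.
by apply: (UT_mmul (trans_relUL compA) Y_ULA); apply: UT_sub subrel_D_UL xD.
Qed.

Lemma ResfA_mmul psi x : x \in UT F relD ->
  Resf tau A psi (mmul Y x)
  = #|UT F (relUR A)|%:R^-1 * \sum_(z in UT F (relUR A)) psi (mmul Y (mmul x z)).
Proof.
move=> xD; rewrite ResfE => [|z zUR].
  by congr (_ * _); apply: eq_bigr => z _; rewrite mmulA.
apply: (UT_mmul (trans_relUP compA)); last exact: UT_sub (subrel_UR_UP compA) zUR.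
apply: (UT_mmul (trans_relUP compA)); first exact: UT_sub (@subrel_UL_UP A) Y_ULA.
by apply: UT_sub xD => i j /subrel_D_UL; apply: subrel_UL_UP.
Qed.

Lemma ResfB psi :
  Resf tau B psi Y = #|UT F (relUR B)|%:R^-1 * \sum_(w in UT F (relUR B)) psi (mmul Y w).
Proof.
rewrite ResfE // => w wUR; apply: (UT_mmul (trans_relUP compB)).
  exact: UT_sub (@subrel_UL_UP B) YUL.
exact: UT_sub (subrel_UR_UP compB) wUR.
Qed.

Lemma tensor_Resf_Resf psi : tensor_Resf tau A B (Resf tau A psi) Y = Resf tau B psi Y.
Proof.
rewrite tensor_ResfE; under eq_bigr => x xD do rewrite ResfA_mmul //.
rewrite -big_distrr /= (sum_D_URA (fun w => psi (mmul Y w))) ResfB.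
exact: invn_mulrn_cancel card_D_URA (cardG_gt0 _).
Qed.

End AtY.

End Refinement.

Theorem proposition4p8 (F : finFieldType) (I : finType) (tau : rel I)
  (A B : seq {set I}) :
  total_order tau -> set_composition A -> set_composition B -> refines B A ->
  forall psi : mat F I -> algC, is_classfun (UT F tau) psi ->
  forall Y : mat F I, Y \in UL F tau B ->
    tensor_Resf tau A B (Resf tau A psi) Y = Resf tau B psi Y.
Proof.
move=> tau_total compA compB refBA psi _ Y YUL.
exact: tensor_Resf_Resf.
Qed.
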